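(* Let $C$ be a nonempty finite set of group indices, where each group $i\in C$ has $N_i$ users (a positive integer) with utility $\theta_i\ln(1+s)$, the $\theta_i>0$ being distinct with $\theta_i>\theta_{i'}$ whenever $i<i'$, and let $s^C>0$ be an amount of resource. Consider the single-price problem restricted to $C$: maximize $p\sum_{i\in C}n_is_i$ over $p>0$ and $n_i\in\{0,\dots,N_i\}$, subject to $s_i=(\theta_i/p-1)^+$ for $i\in C$ and $\sum_{i\in C}n_is_i\le s^C$. For $c\in C$ let $p_C(c)=\frac{\sum_{i\in C,i\le c}N_i\theta_i}{s^C+\sum_{i\in C,i\le c}N_i}$, let $K=\max\{c\in C:\theta_c>p_C(c)\}$, and set $N^C=\sum_{i\in C,i\le K}N_i$, $\theta^C=\frac{1}{N^C}\sum_{i\in C,i\le K}N_i\theta_i$. Then the optimal value of this problem equals $\frac{s^C N^C\theta^C}{s^C+N^C}$, which is the optimal single-price revenue, with resource $s^C$, of a single group consisting of $N^C$ users each with utility $\theta^C\ln(1+s)$.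
   Context: A user with utility $\theta\ln(1+s)$ facing unit price $p$ demands $(\theta/p-1)^+$, where $(x)^+=\max(x,0)$. *)

From HB Require Import structures.
From mathcomp Require Import all_boot all_order all_algebra.
From mathcomp Require Import reals.
Set Implicit Arguments. Unset Strict Implicit. Unset Printing Implicit Defensive.
Import Order.TTheory GRing.Theory Num.Theory.
Local Open Scope ring_scope.

Section Defs.
Variable R : realType.

Definition pos_part (x : R) : R := Num.max x 0.

(* demand of a user with utility theta ln(1+s) at unit price p *)
Definition demand (theta p : R) : R := pos_part (theta / p - 1).

Definition feasible (I : finType) (C : {set I}) (N : I -> nat) (theta : I -> R)
  (s : R) (p : R) (n : I -> nat) : Prop :=
  [/\ 0 < p, (forall i, i \in C -> (n i <= N i)%N) &
      \sum_(i in C) (n i)%:R * demand (theta i) p <= s].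

Definition revenue (I : finType) (C : {set I}) (theta : I -> R) (p : R) (n : I -> nat) : R :=
  p * \sum_(i in C) (n i)%:R * demand (theta i) p.

Definition is_opt_value (I : finType) (C : {set I}) (N : I -> nat) (theta : I -> R)
  (s : R) (v : R) : Prop :=
  (exists p n, feasible C N theta s p n /\ revenue C theta p n = v) /\
  (forall p n, feasible C N theta s p n -> revenue C theta p n <= v).

Definition pC (m : nat) (C : {set 'I_m}) (N : 'I_m -> nat) (theta : 'I_m -> R)
  (s : R) (c : 'I_m) : R :=
  (\sum_(i in C | (i <= c)%N) (N i)%:R * theta i) /
  (s + \sum_(i in C | (i <= c)%N) (N i)%:R).

End Defs.

(** The revenue of a user at price p is p * (theta/p - 1)^+ = (theta - p)^+, which
  is nonincreasing in p.  Hence, if at some price p every user of C taken in full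
  exactly exhausts the resource s, then p * s is optimal: a lower price is capped
  by the resource constraint, a higher one lowers every user's revenue.  The price
  p_C(K) is such a market-clearing price: the groups up to K have theta above it
  and are served, while for the groups after K the choice of K as a maximum, via
  the mediant inequality, forces theta below it.  The aggregated single group
  clears the market at the same price, so both problems have value p_C(K) * s^C. *)

From HB Require Import structures.
From mathcomp Require Import all_boot all_order all_algebra.
From mathcomp Require Import reals.
From mathcomp Require Import ring lra zify.
Import Order.TTheory GRing.Theory Num.Theory.
Local Open Scope ring_scope.

Lemma ler_mediant (F : realFieldType) (a b n x : F) : 0 < b -> 0 <= n ->
  (x <= (a + n * x) / (b + n)) = (x <= a / b).
Proof.
move=> b_gt0 n_ge0; have bn_gt0 : 0 < b + n by lra.
by rewrite !ler_pdivlMr // mulrDr [x * n]mulrC lerD2r.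
Qed.

Section Demand.
Variable R : realType.
Implicit Types (t p q s : R).

Lemma demand_ge0 t p : 0 <= demand t p.
Proof. by rewrite /demand /pos_part le_max lexx orbT. Qed.

Lemma demand_gt p t : 0 < p -> p < t -> demand t p = t / p - 1.
Proof.
move=> p_gt0 pt; rewrite /demand /pos_part max_l // subr_ge0.
by rewrite ler_pdivlMr // mul1r ltW.
Qed.

Lemma demand_le p t : 0 < p -> t <= p -> demand t p = 0.
Proof.
by move=> p_gt0 tp; rewrite /demand /pos_part max_r // subr_le0 ler_pdivrMr // mul1r.
Qed.

Lemma mulr_demand t p : 0 < p -> p * demand t p = pos_part (t - p).
Proof.
move=> p_gt0; rewrite /demand /pos_part maxr_pMr ?ltW // mulr0.
by rewrite mulrBr mulr1 mulrC divfK ?gt_eqF.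
Qed.

Lemma mulr_demand_nonincr t p q : 0 < p -> p <= q ->
  q * demand t q <= p * demand t p.
Proof.
move=> p_gt0 pq; rewrite !mulr_demand ?(lt_le_trans p_gt0) //.
by apply: le_max2; rewrite ?lerD2l ?lerN2.
Qed.

Lemma clearing_price_opt (I : finType) (C : {set I}) (N : I -> nat)
    (theta : I -> R) s p :
  0 < p -> \sum_(i in C) (N i)%:R * demand (theta i) p = s ->
  is_opt_value C N theta s (p * s).
Proof.
move=> p_gt0 clear; split.
  exists p, N; split; last by rewrite /revenue clear.
  by split; [|move=> i _|rewrite clear].
move=> q n [q_gt0 nN fits]; rewrite /revenue.
have [qp|pq] := leP q p.
  by apply: ler_pM (ltW q_gt0) _ qp fits; apply: sumr_ge0 => i _;
    rewrite mulr_ge0 ?ler0n ?demand_ge0.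
rewrite -clear !mulr_sumr; apply: ler_sum => i iC.
rewrite mulrCA [p * _]mulrCA; apply: ler_pM.
- by rewrite ler0n.
- by rewrite mulr_ge0 ?demand_ge0 // ltW.
- by rewrite ler_nat nN.
- exact: mulr_demand_nonincr (ltW pq).
Qed.

Lemma sum_demand_threshold (I : finType) (C : {set I}) (P : pred I)
    (N : I -> nat) (theta : I -> R) p :
  0 < p ->
  {in C, forall i, P i -> p < theta i} ->
  {in C, forall i, ~~ P i -> theta i <= p} ->
  \sum_(i in C) (N i)%:R * demand (theta i) p =
  (\sum_(i in C | P i) (N i)%:R * theta i) / p - \sum_(i in C | P i) (N i)%:R.
Proof.
move=> p_gt0 above below; rewrite (bigID P) /= [X in _ + X]big1 ?addr0; last first.
  by move=> i /andP[iC Pi]; rewrite demand_le ?mulr0 ?below.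
rewrite mulr_suml -sumrB; apply: eq_bigr => i /andP[iC Pi].
by rewrite demand_gt ?above // mulrBr mulr1 mulrA.
Qed.

Lemma threshold_price_opt (I : finType) (C : {set I}) (P : pred I)
    (N : I -> nat) (theta : I -> R) s :
  0 < s -> 0 < \sum_(i in C | P i) (N i)%:R * theta i ->
  let p := (\sum_(i in C | P i) (N i)%:R * theta i) /
           (s + \sum_(i in C | P i) (N i)%:R) in
  {in C, forall i, P i -> p < theta i} ->
  {in C, forall i, ~~ P i -> theta i <= p} ->
  is_opt_value C N theta s (p * s).
Proof.
move=> s_gt0 A_gt0 p above below.
have B_ge0 : 0 <= \sum_(i in C | P i) (N i)%:R :> R.
  by apply: sumr_ge0 => i _; rewrite ler0n.
have p_gt0 : 0 < p by rewrite divr_gt0 //; lra.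
apply: clearing_price_opt => //.
rewrite (sum_demand_threshold _ _ _ N theta _ p_gt0 above below).
by rewrite invf_div mulrC divfK ?gt_eqF // addrK.
Qed.

End Demand.

Section PrefixPrice.
Variables (R : realType) (m : nat) (C : {set 'I_m}) (N : 'I_m -> nat).
Variables (theta : 'I_m -> R) (s : R) (K : 'I_m).
Hypothesis N_gt0 : forall i, i \in C -> (0 < N i)%N.
Hypothesis theta_gt0 : forall i, i \in C -> 0 < theta i.
Hypothesis theta_decr :
  forall i j, i \in C -> j \in C -> (i < j)%N -> theta j < theta i.
Hypothesis s_gt0 : 0 < s.
Hypothesis KC : K \in C.
Hypothesis pC_K : pC C N theta s K < theta K.
Hypothesis K_max : forall c, c \in C -> pC C N theta s c < theta c -> (c <= K)%N.

Lemma pC_lt_theta_prefix i : i \in C -> (i <= K)%N -> pC C N theta s K < theta i.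
Proof.
move=> iC; rewrite leq_eqVlt => /orP[/eqP/val_inj -> //|iK].
exact: lt_trans pC_K (theta_decr _ _ iC KC iK).
Qed.

Lemma theta_le_pC_suffix i : i \in C -> (K < i)%N -> theta i <= pC C N theta s K.
Proof.
move=> iC Ki; pose after_K := [pred j : 'I_m | (j \in C) && (K < j)%N].
have Pi : after_K i by rewrite /= iC.
case: (arg_minnP val Pi) => j /andP[jC Kj] j_min.
have theta_ij : theta i <= theta j.
  have := j_min i Pi; rewrite leq_eqVlt => /orP[/eqP/val_inj -> //|ji].
  exact: ltW (theta_decr _ _ jC iC ji).
apply: le_trans theta_ij _.
have prefix_j F : \sum_(c in C | (c <= j)%N) F c =
    \sum_(c in C | (c <= K)%N) F c + F j :> R.
  rewrite (bigD1 j) /=; last by rewrite jC leqnn.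
  rewrite addrC; congr (_ + _); apply: eq_bigl => c.
  case cC: (c \in C) => //=; have := j_min c; rewrite /= cC -(inj_eq val_inj) /=.
  by move=> min_c; apply/andP/idP => [[cj c_ne_j]|cK]; [|split]; lia.
have : theta j <= pC C N theta s j by rewrite leNgt; apply/negP => /(K_max _ jC); lia.
rewrite /pC (prefix_j (fun c => (N c)%:R * theta c)) (prefix_j (fun c => (N c)%:R)).
rewrite addrA ler_mediant ?ler0n //.
by rewrite ltr_pwDl // sumr_ge0 // => c _; rewrite ler0n.
Qed.

Lemma prefix_count_gt0 : (0 < \sum_(i in C | (i <= K)%N) N i)%N.
Proof. by rewrite (bigD1 K) /= ?KC ?leqnn // ltn_addr ?N_gt0. Qed.

Lemma prefix_weight_gt0 : 0 < \sum_(i in C | (i <= K)%N) (N i)%:R * theta i.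
Proof.
rewrite (bigD1 K) /=; last by rewrite KC leqnn.
apply: ltr_pwDl; first by rewrite mulr_gt0 ?ltr0n ?N_gt0 ?theta_gt0.
by apply: sumr_ge0 => i /andP[/andP[iC _] _]; rewrite mulr_ge0 ?ler0n ?ltW ?theta_gt0.
Qed.

Lemma pC_opt : is_opt_value C N theta s (pC C N theta s K * s).
Proof.
apply: (threshold_price_opt _ _ _ (fun i : 'I_m => (i <= K)%N)) => //.
- exact: prefix_weight_gt0.
- by move=> i iC; apply: pC_lt_theta_prefix.
- by move=> i iC; rewrite -ltnNge; apply: theta_le_pC_suffix.
Qed.

End PrefixPrice.

Theorem lemma1 (R : realType) (m : nat) (C : {set 'I_m}) (N : 'I_m -> nat)
  (theta : 'I_m -> R) (sC : R) (K : 'I_m) :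
  C != set0 ->
  (forall i, i \in C -> (0 < N i)%N) ->
  (forall i, i \in C -> 0 < theta i) ->
  (forall i j, i \in C -> j \in C -> (i < j)%N -> theta j < theta i) ->
  0 < sC ->
  (* K = max { c in C | theta_c > p_C(c) } *)
  K \in C -> pC C N theta sC K < theta K ->
  (forall c, c \in C -> pC C N theta sC c < theta c -> (c <= K)%N) ->
  let NC : nat := (\sum_(i in C | (i <= K)%N) N i)%N in
  let thetaC : R := (NC%:R)^-1 * \sum_(i in C | (i <= K)%N) (N i)%:R * theta i in
  let v : R := sC * NC%:R * thetaC / (sC + NC%:R) in
  is_opt_value C N theta sC v /\
  is_opt_value [set: 'I_1] (fun _ => NC) (fun _ => thetaC) sC v.
Proof.
move=> _ N_gt0 theta_gt0 theta_decr s_gt0 KC pC_K K_max NC thetaC v.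
have NC_gt0 : 0 < NC%:R :> R by rewrite ltr0n prefix_count_gt0.
have NC_thetaC : NC%:R * thetaC = \sum_(i in C | (i <= K)%N) (N i)%:R * theta i.
  by rewrite mulrA mulfV ?gt_eqF ?mul1r.
have thetaC_gt0 : 0 < thetaC.
  by rewrite -(pmulr_rgt0 _ NC_gt0) NC_thetaC; apply: prefix_weight_gt0.
have pC_K_eq : pC C N theta sC K = NC%:R * thetaC / (sC + NC%:R).
  by rewrite NC_thetaC /pC natr_sum.
have -> : v = pC C N theta sC K * sC by rewrite pC_K_eq /v; ring.
split; first exact: pC_opt.
have one_group F : \sum_(i in [set: 'I_1] | predT i) F i = F ord0 :> R.
  by rewrite (big_pred1 ord0) // => j; rewrite in_setT (ord1 j).
have := threshold_price_opt _ _ [set: 'I_1] predT (fun=> NC) (fun=> thetaC) _ s_gt0.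
rewrite /= !one_group -pC_K_eq; apply=> // [|_ _ _].
  by rewrite mulr_gt0.
by rewrite pC_K_eq ltr_pdivrMr ?ltr_wpDr ?ltW // mulrC ltr_pM2l // ltr_pwDl.
Qed.
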